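(* Let $K$ be a polyhedral cone with nonempty interior in a finite dimensional real Banach space $X$, and let $\mathrm{id}$ be the identity on $X$. Let $f:\operatorname{int}K\to\operatorname{int}K$ be order-preserving and homogeneous, and let $g=f+\mathrm{id}$. If $f$ has an eigenvector in $\operatorname{int}K$, then for every $x\in\operatorname{int}K$, $g^k(x)/\|g^k(x)\|$ converges as $k\to\infty$ to an eigenvector of $f$.
   Context: A closed cone is a closed convex set $K$ with $tK\subseteq K$ for $t>0$ and $K\cap(-K)=\{0\}$; it is polyhedral if it is the convex hull of finitely many rays from the origin. The order is $x\le_K y$ iff $y-x\in K$. Order-preserving: $x\le_K y\Rightarrow f(x)\le_K f(y)$; homogeneous: $f(tx)=tf(x)$ for $t>0$. An eigenvector of $f$ is $x$ with $f(x)=\mu x$ for some $\mu$. *)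

From HB Require Import structures.
From mathcomp Require Import all_boot all_order all_algebra.
From mathcomp Require Import all_classical all_reals all_analysis.
Set Implicit Arguments. Unset Strict Implicit. Unset Printing Implicit Defensive.
Import Order.TTheory GRing.Theory Num.Theory.
Import numFieldTopology.Exports numFieldNormedType.Exports.
Local Open Scope ring_scope.
Local Open Scope classical_set_scope.

Definition is_norm (R : realType) (n : nat) (N : 'rV[R]_n -> R) : Prop :=
  [/\ forall x, N x = 0 -> x = 0,
      forall x y, N (x + y) <= N x + N y &
      forall (a : R) x, N (a *: x) = `|a| * N x].

Definition closed_cone (R : realType) (n : nat) (K : set 'rV[R]_n) : Prop :=
  [/\ closed K,
      forall x y (t : R), K x -> K y -> 0 <= t -> t <= 1 -> K (t *: x + (1 - t) *: y),
      forall (t : R) x, 0 < t -> K x -> K (t *: x) &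
      forall x, K x -> K (- x) -> x = 0].

(* Polyhedral: the convex hull of finitely many rays from the origin,
   i.e. the set of nonnegative combinations of finitely many vectors. *)
Definition polyhedral (R : realType) (n : nat) (K : set 'rV[R]_n) : Prop :=
  exists (m : nat) (v : 'I_m -> 'rV[R]_n),
    K = [set x | exists t : 'I_m -> R,
                   (forall i, 0 <= t i) /\ x = \sum_(i < m) t i *: v i].

Definition cone_le (R : realType) (n : nat) (K : set 'rV[R]_n) (x y : 'rV[R]_n) : Prop :=
  K (y - x).

Definition order_preserving_on (R : realType) (n : nat) (K D : set 'rV[R]_n)
  (f : 'rV[R]_n -> 'rV[R]_n) : Prop :=
  forall x y, D x -> D y -> cone_le K x y -> cone_le K (f x) (f y).

Definition homogeneous_on (R : realType) (n : nat) (D : set 'rV[R]_n)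
  (f : 'rV[R]_n -> 'rV[R]_n) : Prop :=
  forall (t : R) x, 0 < t -> D x -> f (t *: x) = t *: f x.

Definition eigenvector (R : realType) (n : nat) (f : 'rV[R]_n -> 'rV[R]_n)
  (x : 'rV[R]_n) : Prop :=
  exists mu : R, f x = mu *: x.

From HB Require Import structures.
From mathcomp Require Import all_boot all_order all_algebra.
From mathcomp Require Import all_classical all_reals all_analysis.
From mathcomp Require Import ring lra.
Import Order.TTheory GRing.Theory Num.Theory.
Import numFieldTopology.Exports numFieldNormedType.Exports.
Local Open Scope ring_scope.
Local Open Scope classical_set_scope.

(* Let f u = lam u with u in int K.  If 0 is interior the space is trivial;
   otherwise lam > 0 and the map T := (f + id) / (1 + lam) is order-preserving,
   homogeneous, fixes u, and g^k x = (1 + lam)^k T^k x.  The orbit y_k := T^k x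
   stays in the order interval [a u, b u].  Thanks to the identity summand, T
   expands gaps: T p - T q >= (1 + lam)^-1 (p - q) whenever q <= p.  Hence a
   ratio bound y_(k+1) <= beta y_k with beta > 1 + eta propagates along the
   orbit, and the gaps beta y_j - y_(j+1) telescope against the bounded orbit,
   which lowers beta by a fixed amount after a fixed number of steps; so for
   every eta, eventually (1 - eta) y_k <= y_(k+1) <= (1 + eta) y_k.  A closed
   cone in finite dimension is normal, so the orbit has a cluster point z in
   int K; asymptotic regularity makes z a fixed point of T, and a sandwich
   (1 - e) z <= y_k <= (1 + e) z, once reached, persists because T is monotone
   and homogeneous, so y_k --> z and g^k x / N (g^k x) --> z / N z. *)

Ltac row_eq := apply/rowP => ?; rewrite !mxE; ring.

Lemma exists_nat_gt {R : realType} (x : R) : exists m : nat, x < m%:R.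
Proof. by exists (Num.truncn x).+1; exact: truncnS_gt. Qed.

Lemma descend_below (R : realType) (P : R -> Prop) (t d b0 : R) :
  0 < d -> P b0 -> (forall b b', b <= b' -> P b -> P b') ->
  (forall b, t <= b <= b0 -> P b -> P (b - d)) -> P t.
Proof.
move=> d_gt0 Pb0 Pmono Pstep.
have descent (m : nat) : P t \/ exists b, [/\ t <= b, b <= b0 - m%:R * d & P b].
  elim: m => [|m [Pt|[b [tb bm Pb]]]]; last 2 first.
  - by left.
  - have md : 0 <= m%:R * d by rewrite mulr_ge0 // ltW.
    have Pbd : P (b - d) by apply: Pstep Pb; rewrite tb /=; lra.
    have [bdt|tbd] := leP (b - d) t; first by left; exact: Pmono bdt Pbd.
    right; exists (b - d); split => //; first exact: ltW.
    by rewrite -natr1 mulrDl mul1r; lra.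
  have [tb0|b0t] := leP t b0; first by right; exists b0; split; rewrite ?mul0r ?subr0.
  by left; apply: Pmono (ltW b0t) Pb0.
have [m mgt] := exists_nat_gt ((b0 - t) / d).
have [//|[b [tb bm _]]] := descent m.
by move: mgt; rewrite ltr_pdivrMr //; lra.
Qed.

Section NormFacts.
Context {R : realType} {n : nat} {N : 'rV[R]_n -> R}.
Hypothesis N_norm : is_norm N.

Lemma isnorm0 : N 0 = 0.
Proof. by case: N_norm => _ _ NZ; rewrite -(scale0r 0) NZ normr0 mul0r. Qed.

Lemma isnormN x : N (- x) = N x.
Proof. by case: N_norm => _ _ NZ; rewrite -scaleN1r NZ normrN normr1 mul1r. Qed.

Lemma isnorm_ge0 x : 0 <= N x.
Proof.
case: N_norm => _ ND _; have := ND x (- x).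
by rewrite subrr isnorm0 isnormN; lra.
Qed.

Lemma isnorm_distB x y : `|N x - N y| <= N (x - y).
Proof.
case: N_norm => _ ND _.
have := ND (x - y) y; have := ND (y - x) x; rewrite !subrK -opprB isnormN.
by rewrite ler_norml; lra.
Qed.

Lemma isnorm_le_mx_norm : exists2 C : R, 0 <= C & forall x, N x <= C * `|x|.
Proof.
case: N_norm => _ ND NZ.
exists (\sum_(j < n) N (delta_mx 0 j)); first by apply: sumr_ge0 => j _; exact: isnorm_ge0.
move=> x; rewrite [in N x](row_sum_delta x) mulr_suml.
elim/big_ind2: _ => [|x1 y1 x2 y2 le1 le2|j _]; first by rewrite isnorm0.
  by apply: le_trans (ND _ _) _; exact: lerD.
rewrite NZ mulrC ler_wpM2l ?isnorm_ge0 // [leRHS]/Num.Def.normr /= mx_normrE.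
by apply/bigmax_geP; right; exists (0, j).
Qed.

Lemma isnorm_continuous : continuous N.
Proof.
have [C C_ge0 NC] := isnorm_le_mx_norm.
move=> x; apply/(@cvgrPdist_le _ _ _ (nbhs x)) => e e_gt0.
have eC_gt0 : 0 < e / (C + 1) by rewrite divr_gt0 // ltr_wpDl.
near=> y; apply: le_trans (isnorm_distB _ _) _; apply: le_trans (NC _) _.
have : `|x - y| <= e / (C + 1).
  by near: y; apply: cvgr_dist_le => //; exact: cvg_id.
rewrite ler_pdivlMr ?ltr_wpDl // mulrDr mulr1 => xy.
by apply: le_trans xy; rewrite mulrC lerDl.
Unshelve. all: by end_near.
Qed.

End NormFacts.

Lemma bounded_seq_cluster {R : realType} {n : nat} {M : R} {s : nat -> 'rV[R]_n} :
  (forall k, `|s k| <= M) ->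
  exists z, forall e, 0 < e -> forall m, exists2 k, (m <= k)%N & `|z - s k| < e.
Proof.
move=> sM; have M_ge0 : 0 <= M by apply: le_trans (sM 0%N).
pose B := closed_ball (0 : 'rV[R]_n) (M + 1).
have B_compact : compact B.
  apply: bounded_closed_compact; last exact: closed_ball_closed.
  rewrite /= /bounded_near; near=> M' => x.
  rewrite /B closed_ballE ?ltr_wpDl // /closed_ball_ /= sub0r normrN => xM.
  by apply: le_trans xM _; near: M'; apply: nbhs_pinfty_ge; rewrite num_real.
have sB : (s @ \oo) B.
  exists 0%N => // k _; rewrite /B closed_ballE ?ltr_wpDl // /closed_ball_ /= sub0r normrN.
  by apply: le_trans (sM k) _; rewrite lerDl.
have [z [_ z_cluster]] := B_compact _ _ sB.
exists z => e e_gt0 m.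
case: (z_cluster (s @` [set k | (m <= k)%N]) (ball z e)) => [||w [[k /= mk <-]]].
- by exists m => // k /= mk; exists k.
- exact: nbhsx_ballx.
by rewrite -ball_normE /ball_ /=; exists k.
Unshelve. all: by end_near.
Qed.

Lemma polyhedral_addr_closed {R : realType} {n : nat} {K : set 'rV[R]_n} :
  polyhedral K -> forall x y, K x -> K y -> K (x + y).
Proof.
move=> [m [v ->]] _ _ [s [s_ge0 ->]] [t [t_ge0 ->]].
exists (fun i => s i + t i); split; first by move=> i; exact: addr_ge0.
by rewrite -big_split; apply: eq_bigr => i _; rewrite scalerDl.
Qed.

Lemma polyhedral_scaler_closed {R : realType} {n : nat} {K : set 'rV[R]_n} :
  polyhedral K -> forall (a : R) x, 0 <= a -> K x -> K (a *: x).
Proof.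
move=> [m [v ->]] a _ a_ge0 [t [t_ge0 ->]].
exists (fun i => a * t i); split; first by move=> i; exact: mulr_ge0.
by rewrite scaler_sumr; apply: eq_bigr => i _; rewrite scalerA.
Qed.

Section ConeOrder.
Context {R : realType} {n : nat} {K : set 'rV[R]_n}.
Hypothesis coneD : forall {x y}, K x -> K y -> K (x + y).
Hypothesis coneZ : forall {a : R} {x}, 0 <= a -> K x -> K (a *: x).
Hypothesis cone_pointed : forall {x}, K x -> K (- x) -> x = 0.
Hypothesis cone_closed : closed K.
Implicit Types (x y z u v w : 'rV[R]_n).

Local Notation "x ⪯ y" := (K (y - x)) (at level 70, no associativity).

Lemma cone_le_trans {y x z} : x ⪯ y -> y ⪯ z -> x ⪯ z.
Proof. by move=> xy yz; have := coneD yz xy; rewrite addrA subrK. Qed.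

Lemma cone_leD {x y x' y'} : x ⪯ y -> x' ⪯ y' -> x + x' ⪯ y + y'.
Proof. by move=> xy xy'; rewrite opprD addrACA; exact: coneD. Qed.

Lemma cone_leZ {a : R} {x y} : 0 <= a -> x ⪯ y -> a *: x ⪯ a *: y.
Proof. by move=> a_ge0 xy; rewrite -scalerBr; exact: coneZ. Qed.

Lemma cone_leZ2r {a b : R} {x} : a <= b -> K x -> a *: x ⪯ b *: x.
Proof. by move=> ab Kx; rewrite -scalerBl; apply: coneZ; rewrite ?subr_ge0. Qed.

Lemma cone_leZ_divl {a : R} {x y} : 0 < a -> a *: x ⪯ y -> x ⪯ a^-1 *: y.
Proof.
move=> a_gt0; have ainv_ge0 : 0 <= a^-1 by rewrite invr_ge0 ltW.
move/(cone_leZ ainv_ge0).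
by rewrite scalerA mulVf ?gt_eqF // scale1r.
Qed.

Lemma cone_leZ_divr {a : R} {x y} : 0 < a -> x ⪯ a *: y -> a^-1 *: x ⪯ y.
Proof.
move=> a_gt0; have ainv_ge0 : 0 <= a^-1 by rewrite invr_ge0 ltW.
move/(cone_leZ ainv_ge0).
by rewrite scalerA mulVf ?gt_eqF // scale1r.
Qed.

Lemma cone_le_anti {x y} : x ⪯ y -> y ⪯ x -> x = y.
Proof.
by move=> xy yx; apply/eqP; rewrite eq_sym -subr_eq0; apply/eqP/cone_pointed; rewrite ?opprB.
Qed.

Lemma interior_cone_ball z : interior K z ->
  exists2 r : R, 0 < r & forall (e : R) h, 0 < e -> `|h| <= e * r -> K (e *: z + h).
Proof.
move=> /nbhs_ballP [r r_gt0 rK]; exists (r / 2); first by rewrite divr_gt0.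
move=> e h e_gt0 her; have e_ge0 := ltW e_gt0.
have : K (z + e^-1 *: h).
  apply: rK; rewrite -ball_normE /ball_ /= opprD addNKr normrN normrZ.
  rewrite ger0_norm ?invr_ge0 // mulrC ltr_pdivrMr //; apply: le_lt_trans her _.
  by rewrite mulrC ltr_pM2r // ltr_pdivrMr // ltr_pMr // ltr1n.
by move/(coneZ e_ge0); rewrite scalerDr scalerA mulfV ?gt_eqF // scale1r.
Qed.

Lemma interior_coneD {z w} : interior K z -> K w -> interior K (z + w).
Proof.
move=> /nbhs_ballP [r r_gt0 rK] Kw; apply/nbhs_ballP; exists r => // v zv.
have : K (v - w) by apply: rK; move: zv; rewrite -!ball_normE /ball_ /= opprB addrA.
by move/coneD/(_ Kw); rewrite subrK.
Qed.

Lemma interior_coneZ {a : R} {z} : 0 < a -> interior K z -> interior K (a *: z).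
Proof.
move=> a_gt0 /nbhs_ballP [r r_gt0 rK]; apply/nbhs_ballP; exists (a * r).
  exact: mulr_gt0.
move=> v; rewrite -ball_normE /ball_ /= => zv.
have : K (a^-1 *: v).
  apply: rK; rewrite -ball_normE /ball_ /=.
  have -> : z - a^-1 *: v = a^-1 *: (a *: z - v).
    by rewrite scalerBr scalerA mulVf ?gt_eqF // scale1r.
  by rewrite normrZ gtr0_norm ?invr_gt0 // ltr_pdivrMl.
by move/(coneZ (ltW a_gt0)); rewrite scalerA mulfV ?gt_eqF // scale1r.
Qed.

Lemma interior_cone_lower {z} u : interior K z -> exists2 a : R, 0 < a & a *: u ⪯ z.
Proof.
move=> /interior_cone_ball [r r_gt0 rK].
have u1_gt0 : 0 < `|u| + 1 by rewrite ltr_wpDl.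
exists (r / (`|u| + 1)); first by rewrite divr_gt0.
rewrite -[z]scale1r; apply: rK => //; rewrite mul1r normrN normrZ gtr0_norm ?divr_gt0 //.
by rewrite mulrAC ler_pdivrMr // ler_pM2l // lerDl.
Qed.

Lemma interior_cone_upper z {u} : interior K u -> exists2 b : R, 0 < b & z ⪯ b *: u.
Proof.
move=> /interior_cone_ball [r r_gt0 rK].
have b_gt0 : 0 < `|z| / r + 1 by rewrite ltr_wpDl // divr_ge0 // ltW.
exists (`|z| / r + 1) => //; apply: rK => //.
by rewrite normrN mulrDl mul1r mulfVK ?gt_eqF // lerDl ltW.
Qed.

Lemma interior_cone_sandwich {z} : interior K z ->
  exists2 r : R, 0 < r & forall (e : R) y, 0 < e -> `|y - z| <= e * r ->
    (1 - e) *: z ⪯ y /\ y ⪯ (1 + e) *: z.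
Proof.
move=> /interior_cone_ball [r r_gt0 rK]; exists r => // e y e_gt0 yz; split.
- have -> : y - (1 - e) *: z = e *: z + (y - z) by row_eq.
  exact: rK.
- have -> : (1 + e) *: z - y = e *: z + (z - y) by row_eq.
  by apply: rK; rewrite // -normrN opprB.
Qed.

Lemma interior_cone0 : interior K 0 -> forall w, w = 0.
Proof.
move=> /interior_cone_ball [r r_gt0 rK].
suff Kall w : K w by move=> w; exact: cone_pointed.
have e_gt0 : 0 < `|w| / r + 1 by rewrite ltr_wpDl // divr_ge0 // ltW.
rewrite -[w]add0r -(scaler0 _ (`|w| / r + 1)); apply: rK => //.
by rewrite mulrDl mul1r mulfVK ?gt_eqF // lerDl ltW.
Qed.

Lemma interior_coneZ_gt0 {a : R} {u} : ~ interior K 0 -> K u ->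
  interior K (a *: u) -> 0 < a.
Proof.
move=> int0 Ku au; rewrite ltNge; apply/negP => a_le0; apply: int0.
have Kau : K (a *: u) := interior_subset au.
have Knau : K (- (a *: u)) by rewrite -scaleNr; apply: coneZ; rewrite ?oppr_ge0.
by rewrite -(cone_pointed Kau Knau).
Qed.

Lemma cone_approx q : (forall e : R, 0 < e -> exists2 w, K w & `|q - w| < e) -> K q.
Proof.
move=> qK; apply: cone_closed => B /nbhs_ballP [e e_gt0 eB].
by have [w Kw qw] := qK e e_gt0; exists w; split => //; apply: eB; rewrite -ball_normE.
Qed.

Lemma cone_le_addZ_gt0 x y w : (forall d : R, 0 < d -> x ⪯ y + d *: w) -> x ⪯ y.
Proof.
move=> xyw; apply: cone_approx => e e_gt0.
have w1_gt0 : 0 < `|w| + 1 by rewrite ltr_wpDl.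
pose d := e / 2 / (`|w| + 1); have d_gt0 : 0 < d by rewrite !divr_gt0.
exists (y + d *: w - x); first exact: xyw.
have -> : y - x - (y + d *: w - x) = - (d *: w) by row_eq.
rewrite normrN normrZ gtr0_norm // /d mulrAC ltr_pdivrMr //.
rewrite (@le_lt_trans _ _ (e / 2 * (`|w| + 1))) ?ler_pM2l ?divr_gt0 ?lerDl //.
by rewrite ltr_pM2r // ltr_pdivrMr // ltr_pMr // ltr1n.
Qed.

Lemma cone_squeeze p z :
  (forall d : R, 0 < d -> p ⪯ (1 + d) *: z /\ (1 - d) *: z ⪯ p) -> p = z.
Proof.
move=> pz; apply: cone_le_anti; apply: (@cone_le_addZ_gt0 _ _ z) => d d_gt0.
- by have [+ _] := pz d d_gt0; rewrite scalerDl scale1r.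
- have [_] := pz d d_gt0.
  by have -> : p - (1 - d) *: z = p + d *: z - z by row_eq.
Qed.

Lemma cone_normal : exists2 C : R, 0 < C & forall h v, K h -> h ⪯ v -> `|h| <= C * `|v|.
Proof.
apply: contrapT => not_normal.
have /choice [st st_prop] : forall k : nat, exists st : 'rV[R]_n * 'rV[R]_n,
    [/\ K st.1, st.1 ⪯ st.2, `|st.1| = 1 & k.+1%:R * `|st.2| < 1].
  move=> k; apply: contrapT => no_st; apply: not_normal; exists k.+1%:R => // h v Kh hv.
  rewrite leNgt; apply/negP => vh; apply: no_st.
  have h_gt0 : 0 < `|h| by apply: le_lt_trans vh; rewrite mulr_ge0.
  have hinv_ge0 : 0 <= `|h|^-1 by rewrite invr_ge0 ltW.
  exists (`|h|^-1 *: h, `|h|^-1 *: v); split => /=; first exact: coneZ.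
  - by rewrite -scalerBr; exact: coneZ.
  - by rewrite normrZ ger0_norm // mulVf ?gt_eqF.
  - by rewrite normrZ ger0_norm // mulrCA mulrC ltr_pdivrMr // mul1r.
have st_bounded k : `|(st k).1| <= 1 by case: (st_prop k) => _ _ ->.
have [z z_cluster] := bounded_seq_cluster st_bounded.
have Kz : K z.
  apply: cone_approx => e e_gt0; have [k _ zk] := z_cluster e e_gt0 0%N.
  by exists (st k).1 => //; case: (st_prop k).
have Knz : K (- z).
  apply: cone_approx => e e_gt0.
  have [m me] := exists_nat_gt (2 / e).
  have [k mk zk] := z_cluster (e / 2) (divr_gt0 e_gt0 (ltr0Sn R 1)) m.
  have [_ st_le _ st_small] := st_prop k; exists ((st k).2 - (st k).1) => //.
  have -> : - z - ((st k).2 - (st k).1) = - (z - (st k).1) - (st k).2 by row_eq.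
  apply: le_lt_trans (ler_normB _ _) _; rewrite normrN [e]splitr ltrD //.
  have k_gt : 2 / e < k.+1%:R by apply: lt_le_trans me _; rewrite ler_nat; exact: leqW.
  move: st_small k_gt; rewrite ltr_pdivrMr //; set t := `|_|; set m1 := _%:R.
  have : 0 <= t := normr_ge0 _; nra.
have [k _] := z_cluster (1 / 2) (divr_gt0 ltr01 (ltr0Sn R 1)) 0%N.
by case: (st_prop k) => _ _ st1 _; rewrite (cone_pointed Kz Knz) sub0r normrN st1; lra.
Qed.

Lemma cone_sandwich_cvg (s : nat -> 'rV[R]_n) z :
  (forall e : R, 0 < e < 1 ->
     \forall k \near \oo, (1 - e) *: z ⪯ s k /\ s k ⪯ (1 + e) *: z) ->
  s @ \oo --> z.
Proof.
move=> sandwich; have [C C_gt0 normal] := cone_normal.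
apply/cvgrPdist_le => e e_gt0.
have D_gt0 : 0 < (2 * C + 1) * (`|z| + 1) by rewrite mulr_gt0 ?ltr_wpDl // mulr_ge0 // ltW.
pose eps := Num.min (e / ((2 * C + 1) * (`|z| + 1))) (1 / 2).
have eps_gt0 : 0 < eps by rewrite lt_min !divr_gt0.
have eps_lt1 : eps < 1 by rewrite gt_min; apply/orP; right; rewrite ltr_pdivrMr //; lra.
have eps_le : eps * ((2 * C + 1) * (`|z| + 1)) <= e.
  by rewrite -ler_pdivlMr // ge_min lexx.
have eps_01 : 0 < eps < 1 by rewrite eps_gt0 eps_lt1.
apply: filterS (sandwich eps eps_01) => k [lo hi].
have : `|s k - (1 - eps) *: z| <= C * `|(2 * eps) *: z|.
  apply: (normal _ _ lo).
  by have -> : (2 * eps) *: z - (s k - (1 - eps) *: z) = (1 + eps) *: z - s k by row_eq.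
rewrite normrZ (gtr0_norm (mulr_gt0 _ eps_gt0)) // => near_lo.
have -> : z - s k = eps *: z - (s k - (1 - eps) *: z) by row_eq.
apply: le_trans (ler_normB _ _) _; rewrite normrZ gtr0_norm //.
move: near_lo eps_le; set Z := `|z|; set H := `|_ - _|; have : 0 <= Z := normr_ge0 _.
by nra.
Qed.

Lemma cone_chain {c : R} {e : 'rV[R]_n} {w z : nat -> 'rV[R]_n} :
  0 <= c <= 1 -> (forall j, K (w j)) -> (forall j, c *: w j ⪯ w j.+1) ->
  (forall j, z j - z j.+1 + e ⪯ w j) ->
  forall j, c ^+ j *: (z 0%N - z j.+1 + j.+1%:R *: e) ⪯ j.+1%:R *: w j.
Proof.
move=> /andP[c_ge0 c_le1] Kw cw zw; elim=> [|j IH]; first by rewrite expr0 !scale1r.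
have cj_ge0 : 0 <= c ^+ j.+1 by rewrite exprn_ge0.
have -> : c ^+ j.+1 *: (z 0%N - z j.+2 + j.+2%:R *: e) =
    c *: (c ^+ j *: (z 0%N - z j.+1 + j.+1%:R *: e)) + c ^+ j.+1 *: (z j.+1 - z j.+2 + e).
  by rewrite exprS; row_eq.
have -> : j.+2%:R *: w j.+1 = j.+1%:R *: w j.+1 + w j.+1 by row_eq.
apply: cone_leD.
- apply: cone_le_trans (cone_leZ c_ge0 IH) _.
  by rewrite scalerA mulrC -scalerA; apply: cone_leZ.
- apply: cone_le_trans (cone_leZ cj_ge0 (zw j.+1)) _.
  by rewrite -[X in _ ⪯ X]scale1r; apply: cone_leZ2r; rewrite ?exprn_ile1.
Qed.

Section NormalizedIteration.
Context {f : 'rV[R]_n -> 'rV[R]_n} {lam : R} {u : 'rV[R]_n}.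
Hypothesis f_interior : forall {x}, interior K x -> interior K (f x).
Hypothesis f_mono : order_preserving_on K (interior K) f.
Hypothesis f_hom : homogeneous_on (interior K) f.
Hypothesis u_interior : interior K u.
Hypothesis f_u : f u = lam *: u.
Hypothesis lam_gt0 : 0 < lam.

Local Notation c := (1 + lam)^-1.

Definition step x := c *: (f x + x).

Lemma lam1_gt0 : 0 < 1 + lam. Proof. exact: addr_gt0. Qed.

Lemma lam1_inv_gt0 : 0 < c. Proof. by rewrite invr_gt0 lam1_gt0. Qed.

Lemma lam1_inv_le1 : c <= 1.
Proof. by rewrite invr_le1 ?unitfE ?gt_eqF ?lam1_gt0 // lerDl ltW. Qed.

Lemma step_interior x : interior K x -> interior K (step x).
Proof.
move=> x_int; apply: interior_coneZ lam1_inv_gt0 _.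
exact: interior_coneD (f_interior x_int) (interior_subset x_int).
Qed.

Lemma step_mono {x y} : interior K x -> interior K y -> x ⪯ y -> step x ⪯ step y.
Proof.
move=> x_int y_int xy; rewrite -scalerBr opprD addrACA.
by apply: coneZ (ltW lam1_inv_gt0) (coneD (f_mono _ _ x_int y_int xy) xy).
Qed.

Lemma step_hom (a : R) x : 0 < a -> interior K x -> step (a *: x) = a *: step x.
Proof. by move=> a_gt0 x_int; rewrite /step f_hom // -scalerDr scalerA mulrC -scalerA. Qed.

Lemma step_gap {x y} : interior K x -> interior K y -> y ⪯ x ->
  c *: (x - y) ⪯ step x - step y.
Proof.
move=> x_int y_int yx.
have -> : step x - step y - c *: (x - y) = c *: (f x - f y) by rewrite /step; row_eq.
by apply: coneZ (ltW lam1_inv_gt0) _; exact: f_mono.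
Qed.

Lemma step_u : step u = u.
Proof.
by rewrite /step f_u; apply/rowP => i; rewrite !mxE; field; rewrite gt_eqF ?lam1_gt0.
Qed.

Lemma step_fixed_eigen {z} : step z = z -> f z = lam *: z.
Proof.
move=> /(congr1 (fun v => (1 + lam) *: v)).
rewrite /step scalerA mulfV ?gt_eqF ?lam1_gt0 // scale1r scalerDl scale1r [z + _]addrC.
exact: addIr.
Qed.

Lemma iter_step_interior k {x} : interior K x -> interior K (iter k step x).
Proof. by move=> x_int; elim: k => [|k IHk] //; exact: step_interior. Qed.

Lemma iter_shift_step x k : interior K x ->
  iter k (fun v => f v + v) x = (1 + lam) ^+ k *: iter k step x.
Proof.
move=> x_int; elim: k => [|k IHk]; first by rewrite expr0 scale1r.
have yk_int := iter_step_interior k x_int.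
rewrite !iterS IHk f_hom ?exprn_gt0 ?lam1_gt0 //.
by rewrite /step; apply/rowP => i; rewrite !mxE exprSr; field; rewrite gt_eqF ?lam1_gt0.
Qed.

Section Trajectory.
Context {x : 'rV[R]_n} {a b : R}.
Hypotheses (x_interior : interior K x) (a_gt0 : 0 < a) (b_gt0 : 0 < b).
Hypotheses (ux : a *: u ⪯ x) (xu : x ⪯ b *: u).

Local Notation y k := (iter k step x).
Local Notation y_int k := (iter_step_interior k x_interior).
Local Notation delta q := (c ^+ q / (q.+1%:R * b)).

Lemma traj_bounds k : a *: u ⪯ y k /\ y k ⪯ b *: u.
Proof.
have step_scaled_u (t : R) : 0 < t -> step (t *: u) = t *: u.
  by move=> t_gt0; rewrite step_hom // step_u.
elim: k => [|k [au_le le_bu]] //; rewrite iterS; split.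
- have := step_mono (interior_coneZ a_gt0 u_interior) (y_int k) au_le.
  by rewrite step_scaled_u.
- have := step_mono (y_int k) (interior_coneZ b_gt0 u_interior) le_bu.
  by rewrite step_scaled_u.
Qed.

Lemma traj_ratio_up_propagates {be : R} {k} : 0 < be -> y k.+1 ⪯ be *: y k ->
  forall j, y (j + k).+1 ⪯ be *: y (j + k).
Proof.
move=> be_gt0 yk; elim=> [|j IHj] //; rewrite addSn.
have := step_mono (y_int (j + k).+1) (interior_coneZ be_gt0 (y_int (j + k))) IHj.
by rewrite step_hom //; exact: iter_step_interior.
Qed.

Lemma traj_ratio_lo_propagates {al : R} {k} : 0 < al -> al *: y k ⪯ y k.+1 ->
  forall j, al *: y (j + k) ⪯ y (j + k).+1.
Proof.
move=> al_gt0 yk; elim=> [|j IHj] //; rewrite addSn.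
have := step_mono (interior_coneZ al_gt0 (y_int (j + k))) (y_int (j + k).+1) IHj.
by rewrite step_hom //; exact: iter_step_interior.
Qed.

(* The gaps [w j] shrink at most by the factor [c] per step, while their sum
   dominates the bounded telescoping sum [z 0 - z q.+1] plus [q.+1] copies of
   [(eta * a) *: u]; so [w q] is still above a fixed multiple of [u]. *)
Lemma traj_gap_lower (eta : R) (q m : nat) (w z : nat -> 'rV[R]_n) :
  b + 1 <= q.+1%:R * eta * a ->
  (forall j, K (w j)) -> (forall j, c *: w j ⪯ w j.+1) ->
  (forall j, z j - z j.+1 + (eta * a) *: u ⪯ w j) -> K (z 0%N - z q.+1 + b *: u) ->
  delta q *: y m ⪯ w q.
Proof.
move=> q_large Kw cw zw zb.
have Ku := interior_subset u_interior.
have c_01 : 0 <= c <= 1 by rewrite ltW ?lam1_inv_gt0 ?lam1_inv_le1.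
have chain := cone_chain c_01 Kw cw zw q.
have u_le : u ⪯ z 0%N - z q.+1 + q.+1%:R *: ((eta * a) *: u).
  have -> : z 0%N - z q.+1 + q.+1%:R *: ((eta * a) *: u) - u =
      z 0%N - z q.+1 + b *: u + (q.+1%:R * eta * a - b - 1) *: u by row_eq.
  by apply: coneD zb (coneZ _ Ku); lra.
have cq_ge0 : 0 <= c ^+ q by rewrite exprn_ge0 ?ltW ?lam1_inv_gt0.
have q1_gt0 : (0 : R) < q.+1%:R by [].
have q1_inv_ge0 : 0 <= q.+1%:R^-1 :> R by rewrite invr_ge0 ltW.
have := cone_leZ q1_inv_ge0 (cone_le_trans (cone_leZ cq_ge0 u_le) chain).
rewrite !scalerA mulVf ?gt_eqF // scale1r => cqu_le.
apply: cone_le_trans cqu_le; have [_ le_bu] := traj_bounds m.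
have -> : (q.+1%:R^-1 * c ^+ q) *: u = delta q *: (b *: u).
  by rewrite scalerA; congr (_ *: _); field; rewrite gt_eqF //= addrC natr1.
by apply: cone_leZ _ le_bu; rewrite divr_ge0 // mulr_ge0 // ltW.
Qed.

Lemma traj_ratio_up_decreases {eta be : R} {q k : nat} : 0 < eta -> 1 + eta <= be ->
  b + 1 <= q.+1%:R * eta * a ->
  y k.+1 ⪯ be *: y k -> y (q + k).+1 ⪯ (be - delta q) *: y (q + k).
Proof.
move=> eta_gt0 be_ge q_large yk.
have be_gt0 : 0 < be by lra.
have ratio := traj_ratio_up_propagates be_gt0 yk.
have := @traj_gap_lower eta q (q + k) (fun j => be *: y (j + k) - y (j + k).+1)
  (fun j => y (j + k)) q_large ratio.
have -> : (be - delta q) *: y (q + k) - y (q + k).+1 =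
    be *: y (q + k) - y (q + k).+1 - delta q *: y (q + k) by row_eq.
apply.
- move=> j; have := step_gap (interior_coneZ be_gt0 (y_int (j + k))) (y_int (j + k).+1) (ratio j).
  by rewrite step_hom //; exact: iter_step_interior.
- move=> j; rewrite /= -iterS.
  have -> : be *: y (j + k) - y (j + k).+1 - (y (j + k) - y (j + k).+1 + (eta * a) *: u) =
      (be - 1 - eta) *: y (j + k) + eta *: (y (j + k) - a *: u) by row_eq.
  have Kyk := interior_subset (y_int (j + k)).
  by apply: coneD; apply: coneZ => //; try lra; exact: (traj_bounds _).1.
- rewrite /= ?add0n ?addSn -addrA [- _ + _]addrC.
  exact: coneD (interior_subset (y_int k)) (traj_bounds (q + k).+1).2.
Qed.

Lemma traj_ratio_lo_increases {eta al : R} {q k : nat} : 0 < eta -> 0 < al ->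
  al <= 1 - eta -> b + 1 <= q.+1%:R * eta * a ->
  al *: y k ⪯ y k.+1 -> (al + delta q) *: y (q + k) ⪯ y (q + k).+1.
Proof.
move=> eta_gt0 al_gt0 al_le q_large yk.
have ratio := traj_ratio_lo_propagates al_gt0 yk.
have := @traj_gap_lower eta q (q + k) (fun j => y (j + k).+1 - al *: y (j + k))
  (fun j => - y (j + k)) q_large ratio.
have -> : y (q + k).+1 - (al + delta q) *: y (q + k) =
    y (q + k).+1 - al *: y (q + k) - delta q *: y (q + k) by row_eq.
apply.
- move=> j; have := step_gap (y_int (j + k).+1) (interior_coneZ al_gt0 (y_int (j + k))) (ratio j).
  by rewrite step_hom //; exact: iter_step_interior.
- move=> j; rewrite /= -iterS.
  have -> : y (j + k).+1 - al *: y (j + k) - (- y (j + k) - - y (j + k).+1 + (eta * a) *: u) =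
      (1 - al - eta) *: y (j + k) + eta *: (y (j + k) - a *: u) by row_eq.
  have Kyk := interior_subset (y_int (j + k)).
  by apply: coneD; apply: coneZ => //; try lra; exact: (traj_bounds _).1.
- rewrite /= ?add0n ?addSn.
  have -> : - y k - - y (q + k).+1 + b *: u = (b *: u - y k) + y (q + k).+1 by row_eq.
  exact: coneD (traj_bounds k).2 (interior_subset (y_int (q + k).+1)).
Qed.

Lemma exists_gap_index {eta : R} : 0 < eta -> exists q : nat, b + 1 <= q.+1%:R * eta * a.
Proof.
move=> eta_gt0; have ea_gt0 : 0 < eta * a by rewrite mulr_gt0.
have [q q_gt] := exists_nat_gt ((b + 1) / (eta * a)).
exists q; rewrite -mulrA -ler_pdivrMr //; apply/ltW/(lt_le_trans q_gt).
by rewrite ler_nat.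
Qed.

Lemma traj_eventually_ratio_up {eta : R} : 0 < eta -> exists k, y k.+1 ⪯ (1 + eta) *: y k.
Proof.
move=> eta_gt0; have [q q_large] := exists_gap_index eta_gt0.
apply: (@descend_below _ (fun be => exists k, y k.+1 ⪯ be *: y k) _ (delta q) (b / a)).
- by rewrite divr_gt0 ?exprn_gt0 ?lam1_inv_gt0 // mulr_gt0.
- exists 0%N; apply: cone_le_trans (traj_bounds 1).2 _.
  have -> : b *: u = (b / a) *: (a *: u) by rewrite scalerA mulfVK ?gt_eqF.
  by apply: cone_leZ _ ux; rewrite divr_ge0 // ltW.
- move=> be be' bebe' [k yk]; exists k; apply: cone_le_trans yk _.
  exact: cone_leZ2r bebe' (interior_subset (y_int k)).
- move=> be /andP[be_ge _] [k yk]; exists (q + k)%N.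
  exact: traj_ratio_up_decreases eta_gt0 be_ge q_large yk.
Qed.

Lemma traj_eventually_ratio_lo {eta : R} : 0 < eta -> eta < 1 ->
  exists k, (1 - eta) *: y k ⪯ y k.+1.
Proof.
move=> eta_gt0 eta_lt1; have [q q_large] := exists_gap_index eta_gt0.
suff [k yk] : exists k, (- - (1 - eta)) *: y k ⪯ y k.+1 by exists k; rewrite opprK in yk.
(* The lower ratio bound [al] is raised by running [descend_below] on [- al]. *)
apply: (@descend_below _ (fun be => exists k, (- be) *: y k ⪯ y k.+1) _ (delta q) (- (a / b))).
- by rewrite divr_gt0 ?exprn_gt0 ?lam1_inv_gt0 // mulr_gt0.
- exists 0%N; rewrite opprK; apply: cone_le_trans _ (traj_bounds 1).1.
  have -> : a *: u = (a / b) *: (b *: u) by rewrite scalerA mulfVK ?gt_eqF.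
  by apply: cone_leZ _ xu; rewrite divr_ge0 // ltW.
- move=> be be' bebe' [k yk]; exists k; apply: cone_le_trans _ yk.
  by apply: cone_leZ2r (interior_subset (y_int k)); rewrite lerN2.
- move=> be /andP[be_ge be_le] [k yk]; exists (q + k)%N; rewrite opprB [_ - be]addrC.
  have ab_gt0 : 0 < a / b by rewrite divr_gt0.
  by apply: traj_ratio_lo_increases eta_gt0 _ _ q_large yk; lra.
Qed.

Lemma traj_asymptotically_regular {eta : R} : 0 < eta -> eta < 1 ->
  \forall k \near \oo, (1 - eta) *: y k ⪯ y k.+1 /\ y k.+1 ⪯ (1 + eta) *: y k.
Proof.
move=> eta_gt0 eta_lt1.
have [k1 up] := traj_eventually_ratio_up eta_gt0.
have [k2 lo] := traj_eventually_ratio_lo eta_gt0 eta_lt1.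
have up_all := traj_ratio_up_propagates (ltr_wpDr (ltW eta_gt0) ltr01) up.
have eta1_gt0 : 0 < 1 - eta by rewrite subr_gt0.
have lo_all := traj_ratio_lo_propagates eta1_gt0 lo.
exists (maxn k1 k2) => // j /=; rewrite geq_max => /andP[k1j k2j]; split.
- by have := lo_all (j - k2)%N; rewrite subnK.
- by have := up_all (j - k1)%N; rewrite subnK.
Qed.

Lemma traj_order_cluster : exists2 z, interior K z &
  forall e : R, 0 < e -> forall m, exists2 k, (m <= k)%N &
    (1 - e) *: z ⪯ y k /\ y k ⪯ (1 + e) *: z.
Proof.
have [C _ normal] := cone_normal.
have y_bounded k : `|y k| <= C * `|b *: u|.
  exact: normal (interior_subset (y_int k)) (traj_bounds k).2.
have [z z_cluster] := bounded_seq_cluster y_bounded.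
have au_le : a *: u ⪯ z.
  apply: cone_approx => e e_gt0; have [k _ zk] := z_cluster e e_gt0 0%N.
  exists (y k - a *: u); first exact: (traj_bounds k).1.
  by have -> : z - a *: u - (y k - a *: u) = z - y k by row_eq.
have z_int : interior K z.
  rewrite -[z](subrK (a *: u)) addrC.
  exact: interior_coneD (interior_coneZ a_gt0 u_interior) au_le.
have [r r_gt0 sandwich] := interior_cone_sandwich z_int.
exists z => // e e_gt0 m; have [k mk zk] := z_cluster (e * r) (mulr_gt0 e_gt0 r_gt0) m.
by exists k => //; apply: sandwich; rewrite // -normrN opprB ltW.
Qed.

Lemma order_cluster_fixed {z} : interior K z ->
  (forall e : R, 0 < e -> forall m, exists2 k, (m <= k)%N &
     (1 - e) *: z ⪯ y k /\ y k ⪯ (1 + e) *: z) ->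
  step z = z.
Proof.
move=> z_int z_cluster; apply: cone_squeeze => d d_gt0.
(* [e] is small enough that [(1 + e)^2 <= (1 + d) (1 - e)] and
   [(1 - d) (1 + e) <= (1 - e)^2]. *)
pose e := Num.min d 1 / 8.
have e_gt0 : 0 < e by rewrite divr_gt0 // lt_min d_gt0 ltr01.
have [e_le_d e_le1] : e <= d / 8 /\ e <= 1 / 8.
  by split; rewrite ler_pM2r // ge_min lexx ?orbT.
have e_lt1 : e < 1 by lra.
have [k0 _ regular] := traj_asymptotically_regular e_gt0 e_lt1.
have [k k0k [lo hi]] := z_cluster e e_gt0 k0.
have [ratio_lo ratio_hi] := regular k k0k.
have Kz := interior_subset z_int.
have e1m_gt0 : 0 < 1 - e by lra.
have e1p_gt0 : 0 < 1 + e by lra.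
split.
- have step_lo := step_mono (interior_coneZ e1m_gt0 z_int) (y_int k) lo.
  rewrite step_hom // in step_lo.
  have := cone_leZ_divl e1m_gt0 (cone_le_trans step_lo
            (cone_le_trans ratio_hi (cone_leZ (ltW e1p_gt0) hi))).
  move/cone_le_trans; apply; rewrite !scalerA.
  by apply: cone_leZ2r Kz; rewrite mulrC ler_pdivrMr //; nra.
- have step_hi := step_mono (y_int k) (interior_coneZ e1p_gt0 z_int) hi.
  rewrite step_hom // in step_hi.
  have le_step := cone_leZ_divr e1p_gt0 (cone_le_trans
            (cone_le_trans (cone_leZ (ltW e1m_gt0) lo) ratio_lo) step_hi).
  apply: cone_le_trans le_step; rewrite !scalerA.
  by apply: cone_leZ2r Kz; rewrite -mulrA mulrC ler_pdivlMr //; nra.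
Qed.

Lemma traj_cvg_fixed : exists z, [/\ interior K z, step z = z & (fun k => y k) @ \oo --> z].
Proof.
have [z z_int z_cluster] := traj_order_cluster.
have z_fixed := order_cluster_fixed z_int z_cluster.
exists z; split => //; apply: cone_sandwich_cvg => e /andP[e_gt0 e_lt1].
have e1m_gt0 : 0 < 1 - e by lra.
have e1p_gt0 : 0 < 1 + e by lra.
have [k0 _ [lo hi]] := z_cluster e e_gt0 0%N.
exists k0 => // j /= k0j; rewrite -(subnK k0j).
elim: (j - k0)%N => [|i [lo_i hi_i]] //; rewrite addSn iterS; split.
- have := step_mono (interior_coneZ e1m_gt0 z_int) (y_int _) lo_i.
  by rewrite step_hom // z_fixed.
- have := step_mono (y_int _) (interior_coneZ e1p_gt0 z_int) hi_i.
  by rewrite step_hom // z_fixed.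
Qed.

End Trajectory.

Lemma normalized_iter_cvg {N : 'rV[R]_n -> R} {x} : is_norm N -> ~ interior K 0 ->
  interior K x ->
  exists v, [/\ interior K v, f v = lam *: v &
    (fun k => (N (iter k (fun w => f w + w) x))^-1 *: iter k (fun w => f w + w) x)
      @ \oo --> v].
Proof.
move=> N_norm int0 x_int; have [N_eq0 _ NZ] := N_norm.
have [a a_gt0 ux] := interior_cone_lower u x_int.
have [b b_gt0 xu] := interior_cone_upper x u_interior.
have [z [z_int z_fixed y_cvg]] := traj_cvg_fixed x_int a_gt0 b_gt0 ux xu.
have Nz_gt0 : 0 < N z.
  rewrite lt_def isnorm_ge0 // andbT; apply/eqP => /N_eq0 z0.
  by apply: int0; rewrite -z0.
exists ((N z)^-1 *: z); split.
- by apply: interior_coneZ z_int; rewrite invr_gt0.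
- by rewrite f_hom ?invr_gt0 // (step_fixed_eigen z_fixed) !scalerA mulrC.
have -> : (fun k => (N (iter k (fun w => f w + w) x))^-1 *: iter k (fun w => f w + w) x) =
    (fun k => (N (iter k step x))^-1 *: iter k step x).
  apply: funext => k; have pk_gt0 : 0 < (1 + lam) ^+ k by rewrite exprn_gt0 ?lam1_gt0.
  rewrite iter_shift_step // NZ gtr0_norm // scalerA invfM mulrAC mulVf ?gt_eqF //.
  by rewrite mul1r.
have Ny_cvg : (fun k => N (iter k step x)) @ \oo --> N z.
  exact: continuous_cvg _ (isnorm_continuous N_norm z) y_cvg.
by apply: cvgZ (cvgV _ Ny_cvg) y_cvg; rewrite gt_eqF.
Qed.

End NormalizedIteration.

End ConeOrder.

Theorem theorem6p3 (R : realType) (n : nat) (N : 'rV[R]_n -> R)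
  (K : set 'rV[R]_n) (f : 'rV[R]_n -> 'rV[R]_n) :
  is_norm N ->
  closed_cone K -> polyhedral K -> interior K !=set0 ->
  (forall x, interior K x -> interior K (f x)) ->
  order_preserving_on K (interior K) f ->
  homogeneous_on (interior K) f ->
  (exists u, interior K u /\ eigenvector f u) ->
  forall x, interior K x ->
    exists v, interior K v /\ eigenvector f v /\
      (fun k : nat => (N (iter k (fun y => f y + y) x))^-1 *:
                        iter k (fun y => f y + y) x) @ \oo --> v.
Proof.
move=> N_norm [K_closed _ _ K_pointed] K_poly _ f_int f_mono f_hom [u [u_int [lam f_u]]] x x_int.
have KD := polyhedral_addr_closed K_poly; have KZ := polyhedral_scaler_closed K_poly.
have [int0|not_int0] := pselect (interior K 0).
  have all0 := interior_cone0 KZ K_pointed int0.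
  exists x; split => //; split; first by exists 0; rewrite scale0r; exact: all0.
  by rewrite [x]all0; apply: cvg_near_cst; near=> k; exact: all0.
have lam_gt0 : 0 < lam.
  apply: (interior_coneZ_gt0 KZ K_pointed not_int0 (interior_subset u_int)).
  by rewrite -f_u; exact: f_int.
have [v [v_int fv v_cvg]] := normalized_iter_cvg KD KZ K_pointed K_closed f_int f_mono
  f_hom u_int f_u lam_gt0 N_norm not_int0 x_int.
by exists v; split => //; split => //; exists lam.
Unshelve. all: by end_near.
Qed.
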